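(* Let $\mathcal{A}$ be a central and essential arrangement in $\mathbb{Q}^l$ as in the context, with $\lcm$-period $\rho_0$ and constant $q_0$. If $p$ is a prime with $p>q_0$ and $p$ coprime to $\rho_0$, then $\mathcal{A}$ and $\mathcal{A}_p$ are combinatorially equivalent.
   Context: $\mathcal{A}=\{H_1,\dots,H_n\}$: $n$ distinct linear hyperplanes in $\mathbb{Q}^l$ with $\bigcap H_i=\{0\}$, $H_i=\{\alpha_i=0\}$, $\alpha_i=\sum_{k=1}^lc_{ki}x_k$ with $c_{ki}\in\mathbb{Z}$ not all divisible by any prime. $\mathcal{A}_p$ is the family of $n$ hyperplanes $\{(\alpha_i)_p=0\}$ in $\mathbb{F}_p^l$, where $(\alpha_i)_p$ is the reduction mod $p$. Let $C=(c_{ki})\in\mathrm{Mat}_{l\times n}(\mathbb{Z})$ with columns $c_1,\dots,c_n$, and for nonempty $J=\{i_1<\dots<i_k\}\subseteq[n]$ let $C_J=(c_{i_1},\dots,c_{i_k})$. There are unimodular $S_J\in\mathrm{Mat}_{l\times l}(\mathbb{Z})$, $T_J\in\mathrm{Mat}_{k\times k}(\mathbb{Z})$ with $S_JC_JT_J$ equal to the Smith normal form, having diagonal block $\mathrm{diag}(e_{J,1},\dots,e_{J,r})$, $e_{J,i}>0$, $e_{J,1}\mid\dots\mid e_{J,r}$, $r=\mathrm{rk}(C_J)$, and zeros elsewhere; set $e(J)=e_{J,r}$. The $\lcm$-period is $\rho_0=\lcm\{e(J): J\subseteq[n],\ 1\le|J|\le l\}$. Further $q_0=\max_{\emptyset\ne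 J\subseteq[n]}\min_{S_J}\max\{|u| : u \text{ an entry of } S_JC_J \text{ or } C_J\}$, the minimum over all such unimodular $S_J$. Two indexed families $\{H^{(1)}_i\}$ in $K_1^l$, $\{H^{(2)}_i\}$ in $K_2^l$ are combinatorially equivalent if $\dim(H^{(1)}_{i_1}\cap\dots\cap H^{(1)}_{i_k})=\dim(H^{(2)}_{i_1}\cap\dots\cap H^{(2)}_{i_k})$ for all $i_1<\dots<i_k$. *)

From HB Require Import structures.
From mathcomp Require Import all_boot all_order all_algebra.
From Stdlib Require Import ClassicalEpsilon.
Set Implicit Arguments. Unset Strict Implicit. Unset Printing Implicit Defensive.
Import Order.TTheory GRing.Theory Num.Theory.
Local Open Scope ring_scope.

(* The arrangement is given by the integer coefficient matrix C : 'M[int]_(l, n);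
   column i holds the coefficients c_{1i},...,c_{li} of alpha_i. *)

Definition subcols (l n : nat) (C : 'M[int]_(l, n)) (J : {set 'I_n})
  : 'M[int]_(l, #|J|) := \matrix_(i, j) C i (enum_val j).

Definition is_snf (a b : nat) (D : 'M[int]_(a, b)) (d : seq nat) : bool :=
  [&& all (fun x => 0 < x)%N d, sorted dvdn d, (size d <= minn a b)%N &
      D == \matrix_(i, j) (if (i == j :> nat) && (i < size d)%N
                           then (nth 0%N d i)%:Z else 0)].

Definition snf_of (l n : nat) (C : 'M[int]_(l, n)) (J : {set 'I_n})
  (S : 'M[int]_l) (T : 'M[int]_#|J|) (d : seq nat) : Prop :=
  S \in unitmx /\ T \in unitmx /\ is_snf (S *m subcols C J *m T) d.

Definition eJ (l n : nat) (C : 'M[int]_(l, n)) (J : {set 'I_n}) : nat :=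
  last 0%N (epsilon (inhabits [::])
    (fun d => exists S T, @snf_of l n C J S T d)).

Definition rho0 (l n : nat) (C : 'M[int]_(l, n)) : nat :=
  \big[lcmn/1%N]_(J : {set 'I_n} | (0 < #|J| <= l)%N) eJ C J.

Definition entry_bound (l n : nat) (C : 'M[int]_(l, n)) (J : {set 'I_n})
  (S : 'M[int]_l) : nat :=
  \max_(i < l) \max_(j < #|J|)
     maxn (absz ((S *m subcols C J) i j)) (absz (subcols C J i j)).

Definition min_bound (l n : nat) (C : 'M[int]_(l, n)) (J : {set 'I_n}) : nat :=
  let P := fun m : nat => exists S T d, @snf_of l n C J S T d /\
                                       entry_bound C J S = m in
  epsilon (inhabits 0%N) (fun m => P m /\ forall m', P m' -> (m <= m')%N).

Definition q0 (l n : nat) (C : 'M[int]_(l, n)) : nat :=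
  \max_(J : {set 'I_n} | J != set0) min_bound C J.

(* The hyperplane H_i = {x : alpha_i(x) = 0} over a field K, as a row space
   (x a row vector, alpha_i(x) = x *m col i A). *)
Definition hyp (K : fieldType) (l n : nat) (A : 'M[K]_(l, n)) (i : 'I_n) :=
  kermx (col i A).

Definition inter_hyps (K : fieldType) (l n : nat) (A : 'M[K]_(l, n))
  (J : {set 'I_n}) := (\bigcap_(i in J) hyp A i)%MS.

Definition comb_equiv (K1 K2 : fieldType) (l n : nat)
  (A1 : 'M[K1]_(l, n)) (A2 : 'M[K2]_(l, n)) : Prop :=
  forall J : {set 'I_n}, J != set0 ->
    \rank (inter_hyps A1 J) = \rank (inter_hyps A2 J).

Definition AQ (l n : nat) (C : 'M[int]_(l, n)) : 'M[rat]_(l, n) :=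
  map_mx (fun z : int => z%:~R) C.
Definition Ap (p l n : nat) (C : 'M[int]_(l, n)) : 'M['F_p]_(l, n) :=
  map_mx (fun z : int => z%:~R) C.

(* Over any field K, the intersection of the H_i, i in J, is the left kernel of the
   column submatrix C_J, of dimension l - rk_K C_J; so it suffices that reduction mod p
   preserves the rank of every C_J.  If S C_J T = diag(e_1, ..., e_r) is a Smith normal
   form, then rk_Q C_J = r, and also rk_Fp C_J = r as soon as p does not divide
   e_r = e(J), which for |J| <= l follows from e(J) | rho_0.  An arbitrary J contains a
   set J' of r = rk_Q C_J columns independent over Q; as r <= l,
   rk_Fp C_J >= rk_Fp C_J' = r >= rk_Fp C_J. *)

From mathcomp Require Import all_boot all_order all_algebra.
From Stdlib Require Import ClassicalEpsilon.
Set Implicit Arguments. Unset Strict Implicit. Unset Printing Implicit Defensive.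
Import Order.TTheory GRing.Theory Num.Theory.
Local Open Scope ring_scope.

(* [colsubset J C] is [subcols C J], for matrices over any ring. *)
Notation colsubset J M := (colsub (enum_val (A := J)) M).

Section ColumnSubsets.
Variable F : fieldType.

Lemma submx_rowsub_enum m k p (h : 'I_k -> 'I_m) (J : {set 'I_m}) (B : 'M[F]_(m, p)) :
  (forall i, h i \in J) -> (rowsub h B <= rowsub (enum_val (A := J)) B)%MS.
Proof.
move=> hJ; apply/row_subP => i; rewrite row_rowsub.
by rewrite -(enum_rankK_in (hJ i) (hJ i)) -row_rowsub row_sub.
Qed.

Variables (l n : nat) (A : 'M[F]_(l, n)).

Lemma mxrank_colsub_enum_le k (h : 'I_k -> 'I_n) (J : {set 'I_n}) :
  (forall i, h i \in J) -> (\rank (colsub h A) <= \rank (colsubset J A))%N.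
Proof.
move=> hJ; rewrite -mxrank_tr -[X in (_ <= X)%N]mxrank_tr !trmx_mxsub.
exact/mxrankS/submx_rowsub_enum.
Qed.

Lemma mxrank_colsubsetS (J' J : {set 'I_n}) :
  J' \subset J -> (\rank (colsubset J' A) <= \rank (colsubset J A))%N.
Proof.
by move=> sJ'J; apply: mxrank_colsub_enum_le => i; apply/(subsetP sJ'J)/enum_valP.
Qed.

Lemma colsubset_basis (J : {set 'I_n}) :
  exists2 J' : {set 'I_n}, #|J'| = \rank (colsubset J A) &
    J' \subset J /\ \rank (colsubset J' A) = \rank (colsubset J A).
Proof.
set g := enum_val (A := J); set B := colsubset J A; set f := maxrankfun B^T.
pose J' := [set g (f k) | k in 'I_(\rank B^T)].
have g_f_inj : injective (g \o f).
  by apply: inj_comp; [apply: enum_val_inj | apply: maxrankfun_inj].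
exists J'; first by rewrite (card_imset _ g_f_inj) card_ord mxrank_tr.
have sJ'J : J' \subset J by apply/subsetP => _ /imsetP[k _ ->]; apply: enum_valP.
split=> //; apply/eqP; rewrite eqn_leq mxrank_colsubsetS //=.
have -> : \rank B = \rank (colsub (g \o f) A).
  by rewrite colsub_comp -[RHS]mxrank_tr trmx_mxsub (eq_maxrowsub B^T) mxrank_tr.
by apply: mxrank_colsub_enum_le => k; apply: imset_f.
Qed.

Lemma mulmx_colsubset_eq0 k (X : 'M[F]_(k, l)) (J : {set 'I_n}) :
  X *m colsubset J A = 0 <-> {in J, forall i, X *m col i A = 0}.
Proof.
have colXA i : col i (X *m A) = X *m col i A by rewrite !colEsub mulmx_colsub.
rewrite mulmx_colsub; split=> [XA0 i Ji | XA0].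
  by rewrite -colXA -(enum_rankK_in Ji Ji) -col_colsub XA0 col0.
apply/matrixP => r j; move/matrixP: (XA0 _ (enum_valP j)) => /(_ r 0).
by rewrite -colXA !mxE.
Qed.

Lemma mxrank_inter_hyps (J : {set 'I_n}) :
  \rank (inter_hyps A J) = (l - \rank (colsubset J A))%N.
Proof.
rewrite -mxrank_ker; apply/eqmx_rank/andP; split.
  apply/sub_kermxP/mulmx_colsubset_eq0 => i Ji; apply/sub_kermxP.
  by move: i Ji; apply/sub_bigcapmxP.
apply/sub_bigcapmxP => i Ji; apply/sub_kermxP.
by move/mulmx_colsubset_eq0: (mulmx_ker (colsubset J A)); apply.
Qed.

End ColumnSubsets.

Lemma sorted_dvdn_eq0 (e : seq nat) i j : sorted dvdn e ->
  (i <= j)%N -> (j < size e)%N -> nth 0%N e i = 0%N -> nth 0%N e j = 0%N.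
Proof.
move=> se le_ij lt_je ei0; apply/eqP; rewrite -dvd0n -[X in (X %| _)%N]ei0.
by apply: (sorted_leq_nth dvdn_trans dvdnn 0%N se); rewrite // inE (leq_ltn_trans le_ij).
Qed.

Lemma sorted_dvdn_last (d : seq nat) x : sorted dvdn d -> x \in d -> (x %| last 0 d)%N.
Proof.
move=> sd /(nthP 0%N)[i lt_id <-].
have d_gt0 : (0 < size d)%N by apply: leq_ltn_trans lt_id.
rewrite -nth_last; apply: (sorted_leq_nth dvdn_trans dvdnn 0%N sd).
- by [].
- by rewrite inE prednK.
- by rewrite -ltnS prednK.
Qed.

(* The invariant factors are the entries before the first zero, cut at min(a, b). *)
Lemma is_snf_rect_diag a b (e : seq nat) : sorted dvdn e ->
  is_snf (\matrix_(i, j) ((nth 0%N e i)%:Z *+ (i == j :> nat)) : 'M[int]_(a, b))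
         (take (minn (minn a b) (find (pred1 0%N) e)) e).
Proof.
move=> se; set r := minn _ _.
have r_le_find : (r <= find (pred1 0%N) e)%N := geq_minr _ _.
have size_le_r : (size (take r e) <= r)%N by rewrite size_take_min geq_minl.
apply/and4P; split.
- apply/allP => x /(nthP 0%N)[i lt_i <-]; have lt_ir := leq_trans lt_i size_le_r.
  by rewrite nth_take // lt0n; have /negbT := before_find 0%N (leq_trans lt_ir r_le_find).
- exact: take_sorted.
- exact: leq_trans size_le_r (geq_minl _ _).
apply/eqP/matrixP => i j; rewrite !mxE.
case: eqVneq => [ij | _]; last by rewrite mulr0n.
rewrite mulr1n /=; case: ltnP => [lt_i | ge_i].
  by rewrite nth_take // (leq_trans lt_i).
case: (ltnP i (size e)) => [lt_ie | ?]; last by rewrite nth_default.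
have lt_im : (i < minn a b)%N by rewrite leq_min ltn_ord ij ltn_ord.
have ge_ir : (r <= i)%N.
  by move: ge_i; rewrite size_take_min geq_min (leqNgt (size e)) lt_ie orbF.
have r_find : r = find (pred1 0%N) e.
  have : (r < minn a b)%N := leq_ltn_trans ge_ir lt_im.
  by rewrite gtn_min ltnn /= => /ltnW/minn_idPr.
suff -> : nth 0%N e i = 0%N by [].
apply: (sorted_dvdn_eq0 se ge_ir lt_ie); rewrite r_find.
have has0 : has (pred1 0%N) e by rewrite has_find -r_find (leq_ltn_trans ge_ir).
by have /eqP := nth_find 0%N has0.
Qed.

Lemma rect_diag_absz a b (d : seq int) : exists2 T : 'M[int]_b, T \in unitmx &
  (\matrix_(i, j) (d`_i *+ (i == j :> nat)) : 'M_(a, b)) *m T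
  = \matrix_(i, j) ((nth 0%N (map absz d) i)%:Z *+ (i == j :> nat)).
Proof.
exists (diag_mx (\row_(j < b) ((-1) ^+ (d`_j < 0)%R : int))).
  by rewrite unitmxE det_diag; apply: unitr_prod => j _; rewrite mxE unitrX ?unitrN1.
apply/matrixP => i j; rewrite mul_mx_diag !mxE.
case: eqVneq => [-> | _]; last by rewrite !mulr0n mul0r.
case: (ltnP j (size d)) => [lt_jd | ?]; last by rewrite !nth_default ?size_map // mul0r.
by rewrite !mulr1n (nth_map 0) // abszE normrEsign mulrC.
Qed.

Lemma snf_exists a b (M : 'M[int]_(a, b)) :
  exists S T d, S \in unitmx /\ T \in unitmx /\ is_snf (S *m M *m T) d.
Proof.
have [L uL [R uR [d sd ->]]] := int_Smith_normal_form M.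
have [T uT DT] := rect_diag_absz a b d.
set e := map absz d.
exists (invmx L), (invmx R *m T), (take (minn (minn a b) (find (pred1 0%N) e)) e).
split; first by rewrite unitmx_inv.
split; first by rewrite unitmx_mul unitmx_inv uR.
rewrite !mulmxA mulVmx // mul1mx -(mulmxA _ R) mulmxV // mulmx1 DT.
by apply: is_snf_rect_diag; rewrite sorted_map.
Qed.

Lemma eJ_snf l n (C : 'M[int]_(l, n)) J :
  exists S T d, @snf_of l n C J S T d /\ eJ C J = last 0%N d.
Proof.
pose P d := exists S T, @snf_of l n C J S T d.
have ex_snf : exists d, P d.
  by have [S [T [d snfJ]]] := snf_exists (subcols C J); exists d, S, T.
have [S [T snfJ]] := epsilon_spec (inhabits [::]) P ex_snf.
by exists S, T, (epsilon (inhabits [::]) P).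
Qed.

Section IntegerMatricesOverAField.
Context {F : fieldType}.
Local Notation "M ^F" := (map_mx (fun z : int => z%:~R : F) M) (at level 8).

Lemma mxrank_map_unimodular a b (S : 'M[int]_a) (T : 'M[int]_b)
    (M : 'M[int]_(a, b)) :
  S \in unitmx -> T \in unitmx -> \rank (S *m M *m T)^F = \rank M^F.
Proof.
have map_unit k (U : 'M[int]_k) : U \in unitmx -> U^F \in unitmx.
  by rewrite !unitmxE det_map_mx; apply: rmorph_unit.
move=> uS uT; rewrite !map_mxM mxrankMfree ?row_free_unit ?map_unit //.
by rewrite (eqmxMfull _ _) // row_full_unit map_unit.
Qed.

Lemma map_snf_factor a b (D : 'M[int]_(a, b)) d : is_snf D d ->
  D^F = pid_mx (size d)
        *m diag_mx (\row_j (if (j < size d)%N then (nth 0%N d j)%:R else 1)).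
Proof.
case/and4P => _ _ _ /eqP ->; rewrite mul_mx_diag; apply/matrixP => i j; rewrite !mxE.
case: eqVneq => [ij | _] /=; last by rewrite mul0r.
by rewrite ij; case: ltnP; rewrite ?mul1r ?mul0r.
Qed.

Lemma mxrank_map_snf_le a b (D : 'M[int]_(a, b)) d :
  is_snf D d -> (\rank D^F <= size d)%N.
Proof.
move=> snfD; have /and4P[_ _ + _] := snfD; rewrite leq_min => /andP[le_da le_db].
by rewrite (map_snf_factor snfD) (leq_trans (mxrankM_maxl _ _)) ?rank_pid_mx.
Qed.

Lemma mxrank_map_snf a b (D : 'M[int]_(a, b)) d : is_snf D d ->
  all (fun x => x%:R != 0 :> F) d -> \rank D^F = size d.
Proof.
move=> snfD d_nz; have /and4P[_ _ + _] := snfD; rewrite leq_min => /andP[le_da le_db].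
rewrite (map_snf_factor snfD) mxrankMfree ?rank_pid_mx //.
rewrite row_free_unit unitmxE det_diag unitfE; apply/prodf_neq0 => j _; rewrite mxE.
by case: ifP => [lt_jd | _]; [apply: (allP d_nz); apply: mem_nth | apply: oner_neq0].
Qed.

Lemma mxrank_map_subcols l n (C : 'M[int]_(l, n)) J S T d : @snf_of l n C J S T d ->
  \rank (colsub (enum_val (A := J)) C^F) = \rank (S *m subcols C J *m T)^F.
Proof. by case=> uS [uT _]; rewrite mxrank_map_unimodular // map_mxsub. Qed.

End IntegerMatricesOverAField.

Section Reduction.
Variables (l n : nat) (C : 'M[int]_(l, n)).

Lemma mxrank_AQ_snf (J : {set 'I_n}) S T d :
  @snf_of l n C J S T d -> \rank (colsubset J (AQ C)) = size d.
Proof.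
move=> snfJ; rewrite (mxrank_map_subcols snfJ); case: snfJ => _ [_ snfD].
apply: (mxrank_map_snf snfD); apply/allP => x x_d; rewrite pnatr_eq0 -lt0n.
by case/and4P: snfD => /allP/(_ x x_d).
Qed.

Lemma mxrank_Ap_snf_le p (J : {set 'I_n}) S T d :
  @snf_of l n C J S T d -> (\rank (colsubset J (Ap p C)) <= size d)%N.
Proof.
move=> snfJ; rewrite (mxrank_map_subcols snfJ).
by case: snfJ => _ [_ /mxrank_map_snf_le].
Qed.

Lemma mxrank_Ap_snf p (J : {set 'I_n}) S T d : prime p -> @snf_of l n C J S T d ->
  coprime p (last 0%N d) -> \rank (colsubset J (Ap p C)) = size d.
Proof.
move=> p_pr snfJ p_e; rewrite (mxrank_map_subcols snfJ); case: snfJ => _ [_ snfD].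
apply: (mxrank_map_snf snfD); apply/allP => x x_d.
rewrite -unitfE unitFpE //; apply: coprime_dvdr p_e; apply: sorted_dvdn_last x_d.
by case/and4P: snfD.
Qed.

Lemma mxrank_Ap_le_AQ p (J : {set 'I_n}) :
  (\rank (colsubset J (Ap p C)) <= \rank (colsubset J (AQ C)))%N.
Proof.
have [S [T [d [snfJ _]]]] := eJ_snf C J.
by rewrite (mxrank_AQ_snf snfJ) (mxrank_Ap_snf_le p snfJ).
Qed.

Variable p : nat.
Hypotheses (p_pr : prime p) (p_rho0 : coprime p (rho0 C)).

Lemma mxrank_Ap_small (J : {set 'I_n}) : (0 < #|J| <= l)%N ->
  \rank (colsubset J (Ap p C)) = \rank (colsubset J (AQ C)).
Proof.
move=> J_small; have [S [T [d [snfJ eJd]]]] := eJ_snf C J.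
have p_e : coprime p (last 0%N d).
  by rewrite -eJd; apply: coprime_dvdr p_rho0; exact: (biglcmn_sup J J_small (dvdnn _)).
by rewrite (mxrank_AQ_snf snfJ) (mxrank_Ap_snf p_pr snfJ p_e).
Qed.

Lemma mxrank_colsubset_Ap (J : {set 'I_n}) :
  \rank (colsubset J (Ap p C)) = \rank (colsubset J (AQ C)).
Proof.
apply/eqP; rewrite eqn_leq mxrank_Ap_le_AQ /=.
have [J' card_J' [sJ'J rank_J']] := colsubset_basis (AQ C) J.
have [-> // | r_gt0] := posnP (\rank (colsubset J (AQ C))).
by rewrite -rank_J' -mxrank_Ap_small ?mxrank_colsubsetS // card_J' r_gt0 rank_leq_row.
Qed.

End Reduction.

Theorem corollary7p3 (l n : nat) (C : 'M[int]_(l, n))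
  (* coefficients of each alpha_i not all divisible by any prime *)
  (Hprim : forall (i : 'I_n) (q : nat), prime q ->
             ~~ [forall k : 'I_l, (q%:Z %| C k i)%Z])
  (* the H_i are distinct *)
  (Hdist : forall i j : 'I_n, i != j -> ~~ (hyp (AQ C) i == hyp (AQ C) j)%MS)
  (* central and essential: the intersection of all H_i is {0} *)
  (Hess : \rank (inter_hyps (AQ C) [set: 'I_n]) = 0%N)
  (p : nat) (Hp : prime p) (Hq0 : (q0 C < p)%N) (Hcop : coprime p (rho0 C)) :
  comb_equiv (AQ C) (Ap p C).
Proof. by move=> J _; rewrite !mxrank_inter_hyps mxrank_colsubset_Ap. Qed.
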